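(* Let $\kappa$ be an uncountable regular cardinal, let $\mathcal{I}$ be a $\kappa$-complete proper ideal on $\kappa$ containing every bounded subset of $\kappa$, and let $\nu\in\{2,\kappa\}$. Consider ${}^{\kappa}\nu$ with the topology $\tau_{\mathcal{I}}$. Then: (1) $\tau_{\mathcal{I}}$ is perfect (no isolated points), regular Hausdorff, and zero-dimensional (has a basis of clopen sets). (2) For any ordinal $\alpha$: the intersection of every sequence $\langle U_\beta:\beta<\alpha\rangle$ of $\tau_{\mathcal{I}}$-open sets is $\tau_{\mathcal{I}}$-open if and only if $\alpha<\kappa$. Consequently, the family of $\tau_{\mathcal{I}}$-clopen subsets of ${}^{\kappa}\nu$ is closed under complements and under unions of fewer than $\kappa$ sets. (3) For every $x\in{}^{\kappa}\nu$, every $\tau_{\mathcal{I}}$-open neighborhood basis of $x$ has size at least $\kappa$. Moreover, every point has a $\tau_{\mathcal{I}}$-open neighborhood basis of size $\kappa$ if and only if $\mathcal{I}$ has a basis of size $\kappa$. If moreover $\mathcal{I}$ contains an unbounded subset of $\kappa$, then: (4) $\tau_{\mathcal{I}}$ is neither compact nor $\kappa$-compact; (5) $\tau_{\mathcal{I}}$ has weight $2^\kappa$, and $|\tau_{\mathcal{I}}|=2^{2^\kappa}$; (6) $\tau_{\mathcal{I}}$ has density character $2^\kappa$.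
   Context: ${}^{\kappa}\nu$ is the set of functions $\kappa\to\nu$. For $f\colon D\to\nu$ with $D\in\mathcal{I}$, $\mathbf{N}_f=\{x\in{}^{\kappa}\nu:f\subseteq x\}$; $\tau_{\mathcal{I}}$ is the topology generated by these sets. A basis for $\mathcal{I}$ is a family $\mathcal{B}\subseteq\mathcal{I}$ such that each member of $\mathcal{I}$ is contained in a member of $\mathcal{B}$. A space is $\kappa$-compact if every open cover has a subcover of size less than $\kappa$. Weight is the least size of an open basis; density character is the least size of a dense subset. *)

From mathcomp Require Import all_boot.
From mathcomp Require Import boolp classical_sets cardinality.
Set Implicit Arguments. Unset Strict Implicit. Unset Printing Implicit Defensive.
Local Open Scope classical_set_scope.
Local Open Scope card_scope.

Section Kappa.
Variables (K : Type) (lt : K -> K -> Prop).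

Definition strict_well_order : Prop :=
  (forall i, ~ lt i i) /\
  (forall i j k, lt i j -> lt j k -> lt i k) /\
  (forall i j, lt i j \/ i = j \/ lt j i) /\
  well_founded lt.

(* "a set of size less than kappa", kappa = |K| *)
Definition small (T : Type) (A : set T) : Prop := ~ ([set: K] #<= A).

Definition initial_ordinal : Prop :=
  strict_well_order /\ forall i, small [set j | lt j i].

Definition bounded (A : set K) : Prop := exists i, forall a, A a -> lt a i.

Definition regular : Prop := forall A : set K, small A -> bounded A.

Definition uncountable_card : Prop := ~ countable [set: K].

Definition uncountable_regular_cardinal : Prop :=
  initial_ordinal /\ regular /\ uncountable_card.

Definition ideal (I : set (set K)) : Prop :=
  I set0 /\
  (forall A B, I B -> A `<=` B -> I A) /\
  (forall A B, I A -> I B -> I (A `|` B)).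

Definition proper_ideal (I : set (set K)) : Prop := ideal I /\ ~ I [set: K].

Definition kappa_complete (I : set (set K)) : Prop :=
  forall F : set (set K), small F -> F `<=` I -> I (\bigcup_(A in F) A).

Definition contains_bounded (I : set (set K)) : Prop :=
  forall A, bounded A -> I A.

Definition ideal_basis (I B : set (set K)) : Prop :=
  B `<=` I /\ forall A, I A -> exists2 C, B C & A `<=` C.

Variable V : Type.
Variable I : set (set K).

(* N_f for f : D -> nu, D in I; f is given by its domain D and a total
   function g agreeing with f on D *)
Definition basic_open (D : set K) (g : K -> V) : set (K -> V) :=
  [set x | forall k, D k -> x k = g k].

Definition subbase : set (set (K -> V)) :=
  [set N | exists D g, I D /\ N = basic_open D g].

(* the topology generated by the sets N_f: the smallest family containing
   them that is closed under finite intersections and arbitrary unions *)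
Definition is_topology (T : set (set (K -> V))) : Prop :=
  T [set: K -> V] /\
  (forall U W, T U -> T W -> T (U `&` W)) /\
  (forall F, F `<=` T -> T (\bigcup_(U in F) U)).

Definition open (U : set (K -> V)) : Prop :=
  forall T, is_topology T -> subbase `<=` T -> T U.

Definition closed (C : set (K -> V)) : Prop := open (~` C).
Definition clopen (U : set (K -> V)) : Prop := open U /\ closed U.

Definition perfect : Prop := forall x, ~ open [set x].

Definition hausdorff : Prop :=
  forall x y, x <> y -> exists U W, [/\ open U, open W, U x, W y & U `&` W = set0].

Definition regular_space : Prop :=
  forall x C, closed C -> ~ C x ->
    exists U W, [/\ open U, open W, U x, C `<=` W & U `&` W = set0].

Definition zero_dimensional : Prop :=
  forall U x, open U -> U x -> exists W, [/\ clopen W, W x & W `<=` U].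

Definition nbhd_basis (x : K -> V) (B : set (set (K -> V))) : Prop :=
  (forall W, B W -> open W /\ W x) /\
  (forall U, open U -> U x -> exists2 W, B W & W `<=` U).

Definition open_basis (B : set (set (K -> V))) : Prop :=
  B `<=` open /\
  (forall U x, open U -> U x -> exists2 W, B W & W x /\ W `<=` U).

Definition open_cover (F : set (set (K -> V))) : Prop :=
  F `<=` open /\ \bigcup_(U in F) U = [set: K -> V].

Definition compact_space : Prop :=
  forall F, open_cover F ->
    exists2 G, G `<=` F & finite_set G /\ \bigcup_(U in G) U = [set: K -> V].

Definition kappa_compact : Prop :=
  forall F, open_cover F ->
    exists2 G, G `<=` F & small G /\ \bigcup_(U in G) U = [set: K -> V].

Definition dense (D : set (K -> V)) : Prop :=
  forall U, open U -> U !=set0 -> U `&` D !=set0.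

End Kappa.

(* A set is open in tau_I iff around each of its points x it contains a basic
   set N_{x|D} = {y | y agrees with x on D} with D in I.  Hence kappa-completeness
   of I makes intersections of fewer than kappa open sets open, and changing x at
   one coordinate outside a given D in I yields perfectness and the lower bound
   kappa for local bases.  An unbounded A in I carries a copy of kappa, along
   which every S <= kappa is coded as a point code S; the neighbourhoods
   N_{code S|A} are pairwise disjoint, and these 2^kappa disjoint open sets give
   the lower bounds in (4)-(6).  The upper bounds come from |kappa x kappa| = kappa
   (Hessenberg), proved with Goedel's canonical well-order of pairs. *)

From Pilot Require Import Defs.
From mathcomp Require Import all_boot.
From mathcomp Require Import boolp classical_sets functions cardinality.

Local Open Scope classical_set_scope.
Local Open Scope card_scope.

Lemma card_le_inj {T U} {A : set T} {B : set U} (f : T -> U) :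
  {homo f : x / A x >-> B x} -> {in A &, injective f} -> A #<= B.
Proof.
move=> fAB finj.
have [g] : $|{injfun A >-> B}| by apply/injfunPex; exists f.
exact: inj_card_le.
Qed.

Lemma card_le_exists_inj {T U} {A : set T} {B : set U} : A #<= B -> A !=set0 ->
  exists2 f : T -> U, {homo f : x / A x >-> B x} & {in A &, injective f}.
Proof.
elim/Ppointed: U => U in B *; first by rewrite !emptyE_subdef => -> [].
by move=> /pcard_leP[f] _; exists f; [exact: 'funS_f | exact: 'inj_f].
Qed.

Lemma card_leT_exists_inj {T U} {B : set U} (t : T) : [set: T] #<= B ->
  exists2 f : T -> U, (forall x, B (f x)) & injective f.
Proof.
move=> /card_le_exists_inj[|f fB finj]; first by exists t.
by exists f => [x | x y]; [exact: fB | apply: finj; rewrite in_setE].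
Qed.

Lemma card_le_powerset {X Y} : [set: X] #<= [set: Y] -> [set: set X] #<= [set: set Y].
Proof.
move=> XY; have [[x0 _]|X0] := pselect ([set: X] !=set0); last first.
  apply: (card_le_inj (fun=> set0)) => // S T _ _ _.
  by apply/seteqP; split=> x; exfalso; apply: X0; exists x.
have [f _ finj] := card_leT_exists_inj x0 XY.
apply: (card_le_inj (image^~ f)) => // S T _ _ eqST.
suff img_inj (S' T' : set X) : f @` S' `<=` f @` T' -> S' `<=` T'.
  by apply/seteqP; split; apply: img_inj; rewrite eqST.
by move=> ST x S'x; have [y T'y /finj <-] := ST _ (imageP f S'x).
Qed.

Lemma card_le_setX {T T' U U'} {A : set T} {A' : set T'} {B : set U} {B' : set U'} :
  A #<= A' -> B #<= B' -> A `*` B #<= A' `*` B'.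
Proof.
move=> AA' BB'.
have [[[a b] [Aa Bb]]|AB0] := pselect (A `*` B !=set0); last first.
  suff -> : A `*` B = set0 by [].
  by apply/seteqP; split=> // p ABp; apply: AB0; exists p.
have [f fA finj] := card_le_exists_inj AA' (ex_intro _ a Aa).
have [g gB ginj] := card_le_exists_inj BB' (ex_intro _ b Bb).
apply: (card_le_inj (fun p => (f p.1, g p.2))).
  by move=> p [/fA ? /gB ?].
move=> [x1 x2] [y1 y2] /set_mem[/= Ax1 Bx2] /set_mem[/= Ay1 By2] [e1 e2].
have -> : x1 = y1 by apply: finj e1; rewrite in_setE.
by have -> : x2 = y2 by apply: ginj e2; rewrite in_setE.
Qed.

Definition finite_or_square_le {T} (A : set T) : Prop :=
  finite_set A \/ A `*` A #<= A.

Lemma infinite_set_two {T} {A : set T} : infinite_set A ->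
  exists a0 a1, [/\ A a0, A a1 & a0 <> a1].
Proof.
move=> /infiniteP /(card_leT_exists_inj 0%N)[e eA einj].
by exists (e 0%N), (e 1%N); split=> // /einj.
Qed.

Lemma card_setU1_le {T} {A : set T} (p : T) :
  infinite_set A -> A `*` A #<= A -> A `|` [set p] #<= A.
Proof.
move=> /infinite_set_two[a0 [a1 [Aa0 Aa1 a01]]] sqA; apply: card_le_trans sqA.
pose f x := if pselect (x = p) is left _ then (a0, a1) else (x, a0).
apply: (card_le_inj f).
  by move=> x; rewrite /f; case: pselect => [_ _ //| xp [Ax|//]]; split.
move=> x y _ _; rewrite /f.
by case: pselect => [->|_]; case: pselect => [->|_] //; case=> // _ /esym.
Qed.

Lemma card_le_fun_bool {K} : [set: K -> bool] #<= [set: set K].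
Proof.
apply: (card_le_inj (fun g : K -> bool => [set k | g k])) => // g g' _ _ gg'.
apply/funext => k; apply/idP/idP => gk.
- by have : [set j | g' j] k by rewrite -gg'.
- by have : [set j | g j] k by rewrite gg'.
Qed.

Lemma card_le_fun_self {K} : [set: K * K] #<= [set: K] -> [set: K -> K] #<= [set: set K].
Proof.
move=> K_sq; apply: card_le_trans (card_le_powerset K_sq).
apply: (card_le_inj (fun g => [set p | p.2 = g p.1])) => // g g' _ _ gg'.
by apply/funext => k; have : [set p : K * K | p.2 = g' p.1] (k, g k) by rewrite -gg'.
Qed.

Lemma card_le_pair_powerset {K} {k0 k1 : K} : k0 <> k1 ->
  [set: set K * set K] #<= [set: set (K * K)].
Proof.
move=> k01.
pose tag (S T : set K) := [set p | (p.1 = k0 /\ S p.2) \/ (p.1 = k1 /\ T p.2)].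
have tag_sub S T S' T' : tag S T = tag S' T' -> S `<=` S' /\ T `<=` T'.
  move=> STST'; split=> x Sx.
    have : tag S' T' (k0, x) by rewrite -STST'; left.
    by case=> [[_] | [/k01]].
  have : tag S' T' (k1, x) by rewrite -STST'; right.
  by case=> [[/esym/k01] | [_]].
apply: (card_le_inj (fun ST => tag ST.1 ST.2)) => // -[S T] [S' T'] _ _ /= STST'.
have [SS' TT'] := tag_sub _ _ _ _ STST'; have [S'S T'T] := tag_sub _ _ _ _ (esym STST').
by congr (_, _); apply/seteqP.
Qed.

Section Hessenberg.
Context {K : Type} {lt : K -> K -> Prop} (lt_wo : strict_well_order lt).

Let ltxx : forall i, ~ lt i i. Proof. by case: lt_wo. Qed.
Let lt_trans : forall i j k, lt i j -> lt j k -> lt i k.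
Proof. by case: lt_wo => _ []. Qed.
Let lt_total : forall i j, lt i j \/ i = j \/ lt j i.
Proof. by case: lt_wo => _ [_ []]. Qed.
Let lt_wf : well_founded lt. Proof. by case: lt_wo => _ [_ []]. Qed.

Let le i j := lt i j \/ i = j.

Let le_lt_trans i j k : le i j -> lt j k -> lt i k.
Proof. by case=> [|->] //; apply: lt_trans. Qed.

Definition seg i := [set j | lt j i].

Lemma seg_sub {i j} : lt i j -> seg i `<=` seg j.
Proof. by move=> ij k /lt_trans; apply. Qed.

Definition least (d : K) (P : set K) : K :=
  if pselect (exists k, P k /\ forall j, P j -> ~ lt j k) is left h
  then projT1 (cid h) else d.

Lemma leastP d (P : set K) : P !=set0 ->
  P (least d P) /\ forall j, P j -> ~ lt j (least d P).
Proof.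
move=> [k Pk]; rewrite /least; case: pselect => [h|nomin]; first by case: (cid h).
exfalso; elim/(well_founded_ind lt_wf): k Pk => k IH Pk.
apply: nomin; exists k; split=> // j Pj jk; exact: IH jk Pj.
Qed.

Definition pmax (p : K * K) : K := if pselect (lt p.1 p.2) then p.2 else p.1.

Lemma pmax_ge p : le p.1 (pmax p) /\ le p.2 (pmax p).
Proof.
rewrite /pmax; case: pselect => h; first by split; [left | right].
by split; [right | have [|[|]] := lt_total p.1 p.2; [|right|left]].
Qed.

Lemma pmax_or p : pmax p = p.1 \/ pmax p = p.2.
Proof. by rewrite /pmax; case: pselect; [right | left]. Qed.

Definition pair_lt (p q : K * K) : Prop :=
  lt (pmax p) (pmax q) \/
  (pmax p = pmax q /\ (lt p.1 q.1 \/ (p.1 = q.1 /\ lt p.2 q.2))).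

Definition pair_seg (q : K * K) := [set p | pair_lt p q].

Lemma pair_lt_trans {p q r} : pair_lt p q -> pair_lt q r -> pair_lt p r.
Proof.
rewrite /pair_lt; case=> [pq|[-> pq]] [qr|[<- qr]];
  [left; exact: lt_trans qr | by left | by left |].
right; split=> //; case: pq qr => [pq|[-> pq]] [qr|[<- qr]];
  [left; exact: lt_trans qr | by left | by left | right; split=> //].
exact: lt_trans qr.
Qed.

Lemma pair_lt_total {p q} : p <> q -> pair_lt p q \/ pair_lt q p.
Proof.
move=> pq; have [|[e|]] := lt_total (pmax p) (pmax q); [by left; left | | by right; left].
have [|[e1|]] := lt_total p.1 q.1; [by left; right; split=> //; left | |].
  have [|[e2|]] := lt_total p.2 q.2; [by left; right; split=> //; right | |].
    by case: pq; case: p q e1 e2 {e} => ? ? [? ?] /= -> ->.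
  by right; right; split=> //; right.
by right; right; split=> //; left.
Qed.

Lemma pair_lt_wf : well_founded pair_lt.
Proof.
suff acc m x y : pmax (x, y) = m -> Acc pair_lt (x, y) by move=> [x y]; exact: acc.
elim/(well_founded_ind lt_wf): m x y => m IHm.
elim/(well_founded_ind lt_wf) => x IHx; elim/(well_founded_ind lt_wf) => y IHy m_xy.
constructor=> -[x' y'] [|[e [|[/= ex' ?]]]]; rewrite ?m_xy.
- by move=> /IHm; apply.
- by move=> /IHx; apply; rewrite e.
- by subst x'; apply: IHy; rewrite // e.
Qed.

Lemma pair_seg_max {p q} : pair_lt p q -> le p.1 (pmax q) /\ le p.2 (pmax q).
Proof.
have [p1 p2] := pmax_ge p.
case=> [pq|[<- _]] //.
by split; left; [exact: le_lt_trans p1 pq | exact: le_lt_trans p2 pq].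
Qed.

Lemma pair_seg_subX q : pair_seg q `<=`
  (seg (pmax q) `|` [set pmax q]) `*` (seg (pmax q) `|` [set pmax q]).
Proof. by move=> p /pair_seg_max[[?|?] [?|?]]; split; by [left | right]. Qed.

(* The least value not taken below w; the default w.1 of [least] is never
   used on the initial segments where pair_rank is studied. *)
Definition pair_rank : K * K -> K := Fix pair_lt_wf (fun _ => K)
  (fun w r => least w.1 (~` [set k | exists v (vw : pair_lt v w), r v vw = k])).

Lemma pair_rank_eq w : pair_rank w = least w.1 (~` (pair_rank @` pair_seg w)).
Proof.
rewrite /pair_rank Fix_eq => [|w' r r' rr']; congr least; apply/funext => k.
  by apply/propext; split=> nk [v]; [move=> vw rk | move=> [vw rk]];
     apply: nk; exists v.
by apply/propext; split=> nk [v [vw rk]]; apply: nk; exists v, vw; rewrite ?rr' // -rr'.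
Qed.

Section SquareOfInitialSegment.
Context {M : set K} (M_down : forall a b, M b -> lt a b -> M a)
  (M_big : forall w, M w.1 -> M w.2 -> ~ (M #<= pair_seg w)).

Lemma pair_rank_seg {w} : M w.1 -> M w.2 ->
  M (pair_rank w) /\ pair_rank @` pair_seg w = seg (pair_rank w).
Proof.
elim/(well_founded_ind pair_lt_wf): w => w IH Mw1 Mw2.
have M_le a : le a (pmax w) -> M a.
  have Mmax : M (pmax w) by case: (pmax_or w) => ->.
  by case=> [/(M_down _ _ Mmax) | ->].
have {}IH v : pair_lt v w ->
    M (pair_rank v) /\ pair_rank @` pair_seg v = seg (pair_rank v).
  by move=> vw; have [/M_le ? /M_le ?] := pair_seg_max vw; exact: IH.
set D := pair_rank @` pair_seg w.
have D_down a b : D b -> lt a b -> D a.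
  move=> [v vw <-] av; have : seg (pair_rank v) a by [].
  rewrite -(proj2 (IH v vw)) => -[u uv <-].
  by exists u => //; apply: pair_lt_trans uv vw.
have [e Me De] : exists2 e, M e & ~ D e.
  apply: contrapT => MD; apply: (M_big _ Mw1 Mw2).
  apply: card_le_trans (card_image_le pair_rank (pair_seg w)).
  by apply: subset_card_le => a Ma; apply: contrapT => Da; apply: MD; exists a.
have [Dr Dr_min] := leastP w.1 _ (ex_intro (~` D) e De).
rewrite -pair_rank_eq in Dr Dr_min; split.
  have [|[->|/(Dr_min e De)]] // := lt_total (pair_rank w) e; exact: M_down.
apply/seteqP; split=> k; last by move=> kr; apply: contrapT => /Dr_min; apply.
move=> Dk; have [//|[ek|rk]] := lt_total k (pair_rank w); case: Dr.
  by rewrite -ek.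
exact: D_down Dk rk.
Qed.

Lemma card_square_le_of_pair_segs : M `*` M #<= M.
Proof.
have rank_lt v w : M w.1 -> M w.2 -> pair_lt v w -> lt (pair_rank v) (pair_rank w).
  move=> Mw1 Mw2 vw; suff : seg (pair_rank w) (pair_rank v) by [].
  by have [_ <-] := pair_rank_seg Mw1 Mw2; exists v.
apply: (card_le_inj pair_rank).
  by move=> w [Mw1 Mw2]; case: (pair_rank_seg Mw1 Mw2).
move=> w w' /set_mem[Mw1 Mw2] /set_mem[Mw1' Mw2'] ww'; apply: contrapT => /pair_lt_total.
by case=> [/(rank_lt _ _ Mw1' Mw2') | /(rank_lt _ _ Mw1 Mw2)]; rewrite ww'; apply: ltxx.
Qed.

End SquareOfInitialSegment.

Lemma pair_seg_card_le {w} : finite_or_square_le (seg (pmax w)) ->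
  finite_set (pair_seg w) \/ pair_seg w #<= seg (pmax w).
Proof.
set c := pmax w => c_sq.
have [c_fin|c_inf] := pselect (finite_set (seg c)).
  left; apply: sub_finite_set (pair_seg_subX w) _.
  by apply: finite_setX; rewrite finite_setU; split=> //; exact: finite_set1.
right; apply: card_le_trans (subset_card_le (pair_seg_subX w)) _.
have sq : seg c `*` seg c #<= seg c by case: c_sq.
have c1 := card_setU1_le c c_inf sq.
exact: card_le_trans (card_le_setX c1 c1) sq.
Qed.

Lemma card_square_le_of_cardinal M :
  (forall a b, M b -> lt a b -> M a) -> infinite_set M ->
  (forall c, M c -> finite_or_square_le (seg c) /\ ~ (M #<= seg c)) ->
  M `*` M #<= M.
Proof.
move=> M_down M_inf M_card; apply: (card_square_le_of_pair_segs M_down) => w Mw1 Mw2 Mw.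
have Mc : M (pmax w) by case: (pmax_or w) => ->.
have [c_sq M_c] := M_card _ Mc.
case: (pair_seg_card_le c_sq) => [w_fin | w_le].
  by apply: M_inf; exact: card_le_finite Mw w_fin.
by apply: M_c; exact: card_le_trans Mw w_le.
Qed.

Lemma seg_finite_or_square_le c : finite_or_square_le (seg c).
Proof.
elim/(well_founded_ind lt_wf): c => m IH.
have [|m_inf] := pselect (finite_set (seg m)); [by left | right].
have [[c cm mc]|m_card] := pselect (exists2 c, lt c m & seg m #<= seg c).
  have [c_fin|c_sq] := IH c cm.
    by case: m_inf; exact: card_le_finite mc c_fin.
  apply: card_le_trans (card_le_setX mc mc) _; apply: card_le_trans c_sq _.
  exact/subset_card_le/seg_sub.
(* no smaller segment is as large as seg m, i.e. m is a cardinal *)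
apply: card_square_le_of_cardinal => // [a b bm ab | c cm]; first exact: lt_trans ab bm.
by split; [exact: IH | move=> mc; apply: m_card; exists c].
Qed.

Lemma card_square_le : (forall i, small K (seg i)) -> infinite_set [set: K] ->
  [set: K * K] #<= [set: K].
Proof.
move=> seg_small K_inf.
apply: card_le_trans (card_square_le_of_cardinal setT _ K_inf _) => //.
  exact: subset_card_le.
by move=> c _; split; [exact: seg_finite_or_square_le | exact: seg_small].
Qed.

End Hessenberg.

Section IdealTopology.
Context {K V : Type} {I : set (set K)} (I_ideal : ideal I).

Let I0 : I set0. Proof. by case: I_ideal. Qed.
Let I_sub : forall {A B}, I B -> A `<=` B -> I A. Proof. by case: I_ideal => _ []. Qed.
Let I_setU : forall {A B}, I A -> I B -> I (A `|` B).
Proof. by case: I_ideal => _ []. Qed.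

Local Notation N := (@basic_open K V).

Lemma basic_open_center D x : N D x x. Proof. by []. Qed.

Lemma basic_open_recenter {D x y} : N D y x -> N D x = N D y.
Proof. by move=> yx; apply/seteqP; split=> z xz k Dk; rewrite xz // yx. Qed.

Lemma basic_openS {D E x} : D `<=` E -> N E x `<=` N D x.
Proof. by move=> DE z xz k /DE; apply: xz. Qed.

Lemma openP U : open I U <-> forall x, U x -> exists2 D, I D & N D x `<=` U.
Proof.
split=> [|Unbhd T [_ [_ T_bigcup]] sub]; last first.
  suff -> : U = \bigcup_(W in [set W | subbase I W /\ W `<=` U]) W.
    by apply: T_bigcup => W [/sub].
  apply/seteqP; split=> [x /Unbhd[D ID DU] | x [W [_ WU] /WU] //].
  by exists (N D x) => //; split=> //; exists D, x.
move=> /(_ [set U | forall x, U x -> exists2 D, I D & N D x `<=` U]); apply.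
  split; [by move=> x _; exists set0 | split].
  - move=> U1 U2 U1nbhd U2nbhd x [/U1nbhd[D1 ID1 sub1] /U2nbhd[D2 ID2 sub2]].
    exists (D1 `|` D2); first exact: I_setU.
    by move=> z xz; split; [apply: sub1 | apply: sub2]; apply: basic_openS xz => k;
      [left | right].
  - move=> F F_nbhd x [W FW /(F_nbhd _ FW)[D ID DW]].
    by exists D => // z /DW Wz; exists W.
move=> _ [D [g [ID ->]]] x gx; exists D => //.
by rewrite (basic_open_recenter gx).
Qed.

Lemma open_bigcup {J} {S : set J} {U : J -> set (K -> V)} :
  (forall j, S j -> open I (U j)) -> open I (\bigcup_(j in S) U j).
Proof.
move=> U_open T T_top sub; rewrite -(bigcup_image S U id).
by apply: T_top.2.2 => _ [j Sj <-]; apply: U_open.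
Qed.

Lemma open_basic_open {D} g : I D -> open I (N D g).
Proof.
by move=> ID; apply/openP => x gx; exists D; rewrite // (basic_open_recenter gx).
Qed.

Context {v0 v1 : V} (v01 : v0 <> v1).

Definition toggle (x : K -> V) (k : K) : K -> V :=
  fun j => if pselect (j = k) then (if pselect (x k = v0) then v1 else v0) else x j.

Lemma toggle_at x k : toggle x k k <> x k.
Proof.
rewrite /toggle; case: pselect => [kk|/(_ erefl)//].
by case: pselect => xk /=; [rewrite xk => /esym/v01 | move/esym].
Qed.

Lemma toggle_notin {D} x {k} : ~ D k -> N D x (toggle x k).
Proof.
by move=> Dk j Dj; rewrite /toggle; case: pselect => // jk; case: Dk; rewrite -jk.
Qed.

Lemma basic_openS_dom {D E} x : N D x `<=` N E x -> E `<=` D.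
Proof. by move=> DE k Ek; apply: contrapT => /(toggle_notin x)/DE/(_ k Ek)/toggle_at. Qed.

Context (I_proper : ~ I [set: K]).

Lemma ideal_not_cover {D} : I D -> exists k, ~ D k.
Proof.
move=> ID; apply: contrapT => D_cover; apply: I_proper; apply: I_sub ID _ => k _.
by apply: contrapT => Dk; apply: D_cover; exists k.
Qed.

Lemma tau_perfect : perfect V I.
Proof.
move=> x /openP/(_ x erefl)[D /ideal_not_cover[k Dk] Dx].
by apply: (toggle_at x k); rewrite (Dx _ (toggle_notin x Dk)).
Qed.

Context (I_set1 : forall k, I [set k]).

Lemma closed_basic_open {D} g : I D -> Defs.closed I (N D g).
Proof.
move=> ID; apply/openP => x gx.
have [k Dk xgk] : exists2 k, D k & x k <> g k.
  apply: contrapT => xg; apply: gx => k Dk; apply: contrapT => xgk; apply: xg.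
  by exists k.
by exists [set k] => // z xz gz; apply: xgk; rewrite -(xz k erefl) gz.
Qed.

Lemma tau_hausdorff : hausdorff V I.
Proof.
move=> x y xy; have [k xyk] : exists k, x k <> y k.
  apply: contrapT => xy_eq; apply: xy; apply/funext => k.
  by apply: contrapT => xyk; apply: xy_eq; exists k.
exists (N [set k] x), (N [set k] y); split; try exact: open_basic_open.
- exact: basic_open_center.
- exact: basic_open_center.
apply/seteqP; split=> // z [xz yz].
by apply: xyk; rewrite -(xz k erefl) -(yz k erefl).
Qed.

Lemma tau_regular : regular_space V I.
Proof.
move=> x C C_closed Cx; have [D ID DC] := proj1 (openP _) C_closed x Cx.
exists (N D x), (~` N D x); split=> //; first exact: open_basic_open.
- exact: closed_basic_open.
- by move=> c Cc /DC.
- by apply/seteqP; split=> // z [].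
Qed.

Lemma tau_zero_dimensional : zero_dimensional V I.
Proof.
move=> U x U_open Ux; have [D ID DU] := proj1 (openP _) U_open x Ux.
by exists (N D x); split=> //; split; [exact: open_basic_open | exact: closed_basic_open].
Qed.

Context (I_complete : kappa_complete I).

Lemma ideal_bigcup {J} {S : set J} {D : J -> set K} : small K S ->
  (forall j, S j -> I (D j)) -> I (\bigcup_(j in S) D j).
Proof.
move=> S_small SD; rewrite -(bigcup_image S D id).
apply: I_complete => [KD | _ [j Sj <-]]; last exact: SD.
by apply: S_small; exact: card_le_trans KD (card_image_le D S).
Qed.

Lemma open_nbhd_ideals {J} {S : set J} {U : J -> set (K -> V)} {x} :
  (forall j, S j -> open I (U j) /\ U j x) ->
  exists D : J -> set K, forall j, S j -> I (D j) /\ N (D j) x `<=` U j.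
Proof.
move=> SU; suff /choice[D DU] : forall j, exists D, S j -> I D /\ N D x `<=` U j.
  by exists D.
move=> j; have [/SU[Uj_open Ujx]|Sj] := pselect (S j).
  by have [D ID DU] := proj1 (openP _) Uj_open x Ujx; exists D.
by exists set0.
Qed.

Lemma open_bigcap {J} {S : set J} {U : J -> set (K -> V)} : small K S ->
  (forall j, S j -> open I (U j)) -> open I (\bigcap_(j in S) U j).
Proof.
move=> S_small U_open; apply/openP => x Ux.
have [D DU] := open_nbhd_ideals (fun j Sj => conj (U_open j Sj) (Ux j Sj)).
exists (\bigcup_(j in S) D j); first by apply: ideal_bigcup => // j /DU[].
by move=> z xz j Sj; apply: (proj2 (DU j Sj)); apply: basic_openS xz => k; exists j.
Qed.

Lemma open_bigcap_iff J :
  (forall U : J -> set (K -> V), (forall j, open I (U j)) -> open I (\bigcap_j U j))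
  <-> small K [set: J].
Proof.
split=> [bigcap_open KJ | J_small U U_open]; last exact: open_bigcap.
have [k0 _] := ideal_not_cover I0.
have [e _ einj] := card_leT_exists_inj k0 KJ.
(* along a copy of K in J, intersect to the non-open singleton of a point *)
pose c : K -> V := fun=> v0.
pose U j := N [set k | e k = j] c.
have U_open j : open I (U j).
  apply: open_basic_open; have [[k1 <-]|nj] := pselect (exists k, e k = j).
    by apply: I_sub (I_set1 k1) _ => k /einj.
  by apply: I_sub I0 _ => k ekj; apply: nj; exists k.
have U_cap : \bigcap_j U j = [set c].
  apply/seteqP; split=> [x xU | _ -> j _ k _ //].
  by apply/funext => k; exact: (xU (e k) Logic.I k erefl).
by apply: (tau_perfect c); rewrite -U_cap; apply: bigcap_open.
Qed.

Lemma clopenC (U : set (K -> V)) : clopen I U -> clopen I (~` U).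
Proof. by move=> [U_open U_closed]; split=> //; rewrite /Defs.closed setCK. Qed.

Lemma clopen_bigcup (F : set (set (K -> V))) : small K F -> F `<=` clopen I ->
  clopen I (\bigcup_(U in F) U).
Proof.
move=> F_small F_clopen; split; first by apply: open_bigcup => U /F_clopen[].
by rewrite /Defs.closed setC_bigcup; apply: open_bigcap => // U /F_clopen[].
Qed.

Lemma nbhd_basis_card_ge (x : K -> V) B : nbhd_basis I x B -> [set: K] #<= B.
Proof.
move=> [B_nbhd B_basis]; apply: contrapT => B_small.
have [D DB] := open_nbhd_ideals (U := id) B_nbhd.
have IE : I (\bigcup_(W in B) D W) by apply: ideal_bigcup => // W /DB[].
have [k Ek] := ideal_not_cover IE.
have [W BW WEk] := B_basis _ (open_basic_open x (I_setU IE (I_set1 k)))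
  (basic_open_center _ x).
have [_ DW] := DB W BW.
have DWk : ~ D W k by move=> DWk; apply: Ek; exists W.
by apply: (toggle_at x k); apply: (WEk _ (DW _ (toggle_notin x DWk))); right.
Qed.

Lemma ideal_basis_card_ge {B} : ideal_basis I B -> [set: K] #<= B.
Proof.
move=> [BI B_cover]; apply: contrapT => B_small; apply: I_proper.
apply: I_sub (I_complete _ B_small BI) _ => k _.
by have [C BC kC] := B_cover _ (I_set1 k); exists C => //; apply: kC.
Qed.

Lemma nbhd_basis_of_ideal_basis (x : K -> V) {B} :
  ideal_basis I B -> nbhd_basis I x ((fun D => N D x) @` B).
Proof.
move=> [BI B_cover]; split=> [_ [D BD <-] | U U_open Ux].
  by split; [apply: open_basic_open; apply: BI | exact: basic_open_center].
have [D ID DU] := proj1 (openP _) U_open x Ux; have [C BC DC] := B_cover D ID.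
by exists (N C x); [exists C | move=> z /(basic_openS DC) /DU].
Qed.

Lemma ideal_basis_of_nbhd_basis {x : K -> V} {B} :
  nbhd_basis I x B -> exists2 C, ideal_basis I C & C #<= B.
Proof.
move=> [B_nbhd B_basis]; have [D DB] := open_nbhd_ideals (U := id) B_nbhd.
exists (D @` B); last exact: card_image_le.
split=> [_ [W BW <-] | E IE]; first by case: (DB W BW).
have [W BW WE] := B_basis _ (open_basic_open x IE) (basic_open_center E x).
exists (D W); first by exists W.
by have [_ DW] := DB W BW; apply: (basic_openS_dom x) => z /DW /WE.
Qed.

Lemma nbhd_basis_card_iff :
  (forall x : K -> V, exists B, nbhd_basis I x B /\ B #= [set: K]) <->
  (exists B, ideal_basis I B /\ B #= [set: K]).
Proof.
split=> [/(_ (fun=> v0))[B [/ideal_basis_of_nbhd_basis[C C_basis CB] BK]] |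
         [B [B_basis BK]] x].
  exists C; split=> //; case/card_eqPle: BK => BK _.
  by apply: Cantor_Bernstein; [exact: card_le_trans CB BK | exact: ideal_basis_card_ge].
have B_nbhd := nbhd_basis_of_ideal_basis x B_basis.
exists ((fun D => N D x) @` B); split=> //; case/card_eqPle: BK => BK _.
by apply: Cantor_Bernstein; [exact: card_le_trans (card_image_le _ _) BK |
  exact: nbhd_basis_card_ge x _ B_nbhd].
Qed.

Section UnboundedIdealSet.
Context {A : set K} {e : K -> K} (IA : I A) (eA : forall k, A (e k))
  (e_inj : injective e).

Definition code (S : set K) : K -> V :=
  fun j => if pselect (exists2 k, S k & e k = j) then v1 else v0.

Lemma code_at S k : code S (e k) = v1 <-> S k.
Proof.
rewrite /code; case: pselect => [Sek | nS] /=; first by case: Sek => k' Sk' /e_inj <-.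
by split=> [/v01 // | Sk]; case: nS; exists k.
Qed.

Lemma basic_open_code_inj S T : N A (code S) (code T) -> S = T.
Proof.
move=> ST; apply/funext => k; apply/propext.
by rewrite -!code_at ST.
Qed.

Lemma card_le_code : [set: set K] #<= [set: K -> V].
Proof.
apply: (card_le_inj code) => // S T _ _ ST; apply: basic_open_code_inj.
by rewrite ST; apply: basic_open_center.
Qed.

Lemma tau_not_compact :
  infinite_set [set: K] -> ~ compact_space V I /\ ~ kappa_compact V I.
Proof.
move=> K_inf; pose F := range (N A).
have F_cover : open_cover I F.
  split=> [_ [x _ <-] | ]; first exact: open_basic_open.
  by apply/seteqP; split=> // x _; exists (N A x) => //; exists x.
have subcover_big G : G `<=` F -> \bigcup_(U in G) U = [set: K -> V] -> [set: K] #<= G.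
  move=> GF G_cover; apply: (card_le_inj (fun k => N A (code [set k]))).
    move=> k _; have : (\bigcup_(U in G) U) (code [set k]) by rewrite G_cover.
    case=> W GW Wk; have [y _ yW] := GF W GW; rewrite -yW in GW Wk.
    by rewrite (basic_open_recenter Wk).
  move=> k k' _ _ kk'; suff kk'1 : [set k] = [set k'].
    by have : [set k'] k by rewrite -kk'1.
  by apply: basic_open_code_inj; rewrite kk'; apply: basic_open_center.
split=> [compact | kcompact].
  have [G GF [G_fin G_cover]] := compact F F_cover.
  by apply: K_inf; apply: card_le_finite (subcover_big G GF G_cover) G_fin.
by have [G GF [G_small G_cover]] := kcompact F F_cover; apply/G_small/subcover_big.
Qed.

Lemma open_basis_card_ge (B : set (set (K -> V))) : open_basis I B -> [set: set K] #<= B.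
Proof.
move=> [_ B_basis].
have /choice[W SW] S : exists W, B W /\ W (code S) /\ W `<=` N A (code S).
  have [W BW [WS WA]] := B_basis _ (code S) (open_basic_open (code S) IA)
    (basic_open_center A (code S)).
  by exists W.
apply: (card_le_inj W) => [S _ | S T _ _ ST]; first by case: (SW S).
have [_ [WS _]] := SW S; have [_ [_ WT]] := SW T.
by apply/esym/basic_open_code_inj; apply: WT; rewrite -ST.
Qed.

Lemma dense_card_ge (D : set (K -> V)) : dense I D -> [set: set K] #<= D.
Proof.
move=> D_dense.
have /choice[d Sd] S : exists d, (N A (code S) `&` D) d.
  apply: D_dense; first exact: open_basic_open.
  by exists (code S); apply: basic_open_center.
apply: (card_le_inj d) => [S _ | S T _ _ ST]; first by case: (Sd S).
have [Sd' _] := Sd S; have [Td _] := Sd T.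
apply: basic_open_code_inj.
rewrite -(basic_open_recenter Sd') ST (basic_open_recenter Td).
exact: basic_open_center.
Qed.

Lemma card_le_opens : [set: set (set K)] #<= [set U : set (K -> V) | open I U].
Proof.
pose U (SS : set (set K)) := \bigcup_(S in SS) N A (code S).
apply: (card_le_inj U) => [SS _ | SS TT _ _ STU].
  by apply: open_bigcup => S _; apply: open_basic_open.
have sub SS' TT' : U SS' = U TT' -> SS' `<=` TT'.
  move=> STU' S SS'S; have : U TT' (code S) by rewrite -STU'; exists S.
  by case=> T TT'T /basic_open_code_inj <-.
by apply/seteqP; split; apply: sub.
Qed.

Context (card_fun : [set: K -> V] #<= [set: set K]).

Lemma card_opens : [set U : set (K -> V) | open I U] #= [set: set (set K)].
Proof.
apply: Cantor_Bernstein; last exact: card_le_opens.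
exact: card_le_trans (card_leT _) (card_le_powerset card_fun).
Qed.

Lemma dense_card : exists D : set (K -> V), dense I D /\ D #= [set: set K].
Proof.
exists [set: K -> V]; split; last exact: Cantor_Bernstein card_fun card_le_code.
by move=> U _ [x Ux]; exists x.
Qed.

Context (card_pair : [set: set K * set K] #<= [set: set K]).

Lemma open_basis_card :
  exists B : set (set (K -> V)), open_basis I B /\ B #= [set: set K].
Proof.
have subbase_basis : open_basis I (@subbase K V I).
  split=> [_ [D [g [ID ->]]] | U x U_open Ux]; first exact: open_basic_open.
  have [D ID DU] := proj1 (openP _) U_open x Ux.
  by exists (N D x) => //; exists D, x.
exists (@subbase K V I); split=> //.
apply: Cantor_Bernstein; last exact: open_basis_card_ge.
have -> : @subbase K V I = (fun p => N p.1 p.2) @` [set p | I p.1].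
  apply/seteqP; split=> [_ [D [g [ID ->]]] | _ [[D g] ID <-]]; first by exists (D, g).
  by exists D, g.
apply: card_le_trans (card_image_le _ _) _; apply: card_le_trans (card_leT _) _.
rewrite -setXTT; apply: card_le_trans card_pair.
by rewrite -setXTT; apply: card_le_setX.
Qed.

End UnboundedIdealSet.

End IdealTopology.

Theorem lemma2p5 (K : Type) (lt : K -> K -> Prop) (V : Type)
    (I : set (set K)) :
  uncountable_regular_cardinal lt ->
  proper_ideal I -> kappa_complete I -> contains_bounded lt I ->
  (V = bool \/ V = K) ->
  (* (1) *)
  [/\ perfect V I, hausdorff V I, regular_space V I
    & zero_dimensional V I] /\
  (* (2) *)
  (forall J : Type,
     (forall U : J -> set (K -> V), (forall j, open I (U j)) ->
        open I (\bigcap_j U j))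
     <-> small K [set: J]) /\
  (forall U : set (K -> V), clopen I U -> clopen I (~` U)) /\
  (forall F : set (set (K -> V)), small K F -> F `<=` clopen I ->
     clopen I (\bigcup_(U in F) U)) /\
  (* (3) *)
  (forall (x : K -> V) B, nbhd_basis I x B -> [set: K] #<= B) /\
  ((forall x : K -> V, exists B, nbhd_basis I x B /\ B #= [set: K]) <->
   (exists B, ideal_basis I B /\ B #= [set: K])) /\
  ((exists A, I A /\ ~ bounded lt A) ->
    (* (4) *)
    (~ compact_space V I /\ ~ kappa_compact V I) /\
    (* (5) *)
    ((exists B : set (set (K -> V)), open_basis I B /\ B #= [set: set K]) /\
     (forall B : set (set (K -> V)), open_basis I B -> [set: set K] #<= B)) /\
    [set U : set (K -> V) | open I U] #= [set: set (set K)] /\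
    (* (6) *)
    ((exists D : set (K -> V), dense I D /\ D #= [set: set K]) /\
     (forall D : set (K -> V), dense I D -> [set: set K] #<= D))).
Proof.
move=> [[K_wo seg_small] [K_reg K_unc]] [I_ideal I_proper] I_complete I_bounded V_eq.
have K_inf : infinite_set [set: K] by move/finite_set_countable.
have I_set1 k : I [set k].
  apply/I_bounded/K_reg => /card_le_finite/(_ (finite_set1 k)); exact: K_inf.
have K_sq := card_square_le K_wo seg_small K_inf.
have [k0 [k1 [_ _ k01]]] := infinite_set_two K_inf.
have [v0 [v1 v01]] : exists v0 v1 : V, v0 <> v1.
  by case: V_eq => ->; [exists false, true | exists k0, k1].
have card_fun : [set: K -> V] #<= [set: set K].
  by case: V_eq => ->; [exact: card_le_fun_bool | exact: card_le_fun_self].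
have card_pair := card_le_trans (card_le_pair_powerset k01) (card_le_powerset K_sq).
split; first by split; [exact: (tau_perfect I_ideal v01 I_proper) |
  exact: (tau_hausdorff I_ideal I_set1) | exact: (tau_regular I_ideal I_set1) |
  exact: (tau_zero_dimensional I_ideal I_set1)].
split; first exact: (open_bigcap_iff I_ideal v01 I_proper I_set1 I_complete).
split; first exact: clopenC.
split; first exact: (clopen_bigcup I_ideal I_complete).
split; first exact: (nbhd_basis_card_ge I_ideal v01 I_proper I_set1 I_complete).
split; first exact: (nbhd_basis_card_iff I_ideal v01 I_proper I_set1 I_complete).
move=> [A [IA A_unbounded]].
have KA : [set: K] #<= A by apply: contrapT => /K_reg.
have [e eA e_inj] := card_leT_exists_inj k0 KA.
split; first exact: (tau_not_compact I_ideal v01 IA eA e_inj K_inf).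
split; first by split;
  [exact: (open_basis_card I_ideal v01 IA eA e_inj card_fun card_pair) |
   exact: (open_basis_card_ge I_ideal v01 IA eA e_inj)].
split; first exact: (card_opens I_ideal v01 IA eA e_inj card_fun).
by split; [exact: (dense_card v01 eA e_inj card_fun) |
  exact: (dense_card_ge I_ideal v01 IA eA e_inj)].
Qed.
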